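(* Let $\tau>\frac{3+\sqrt{17}}{2}$. For Lebesgue-almost every $\gamma\in(0,\tfrac12)$ the following holds: for every $\alpha\in D_{\gamma,\tau}$ with convergents $p_n/q_n$, for all sufficiently large even $n$, $$\frac{p_n}{q_n}+\frac{\gamma}{q_n^{\tau+1}}<\frac{p_{n+2}}{q_{n+2}}-\frac{\gamma}{q_{n+2}^{\tau+1}} \iff \frac{p_n}{q_n}+\frac{\gamma}{q_n^{\tau+1}}<\frac{p_{n+2}}{q_{n+2}}-\frac{\gamma}{q_{n+2}^{\tau+1}}-\frac{2\gamma}{q_{n+2}^{\tau-1}}.$$
   Context: For $x\in\mathbb{R}$, $\|x\|:=\min_{p\in\mathbb{Z}}|x-p|$; $\mathbb{N}=\{1,2,\dots\}$. For $\gamma>0,\tau\ge1$, $D_{\gamma,\tau}:=\{\alpha\in(0,1): \|q\alpha\|\ge\gamma/q^\tau\ \forall q\in\mathbb{N}\}$; its elements are irrational. For irrational $\alpha\in(0,1)$ write $\alpha=\cfrac{1}{a_1+\cfrac{1}{a_2+\cdots}}$, and let $p_n/q_n$ ($n\ge0$) be its convergents: $p_{-1}=1,q_{-1}=0,p_0=0,q_0=1$, $p_n=a_np_{n-1}+p_{n-2}$, $q_n=a_nq_{n-1}+q_{n-2}$. *)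

From HB Require Import structures.
From mathcomp Require Import all_boot all_order all_algebra.
From mathcomp Require Import all_classical all_reals all_analysis.
Set Implicit Arguments. Unset Strict Implicit. Unset Printing Implicit Defensive.
Import Order.TTheory GRing.Theory Num.Theory.
Local Open Scope ring_scope.
Local Open Scope classical_set_scope.

Section Defs.
Variable R : realType.

(* ||x|| = min_{p in Z} |x - p| : the nearest integer is floor x or ceil x *)
Definition dist_int (x : R) : R :=
  Num.min (x - (Num.floor x)%:~R) ((Num.ceil x)%:~R - x).

Definition Dgt (gamma tau : R) : set R :=
  [set alpha | 0 < alpha < 1 /\
     forall q : nat, (0 < q)%N -> gamma / (q%:R `^ tau) <= dist_int (q%:R * alpha)].

Fixpoint cf_rem (alpha : R) (k : nat) : R :=
  match k with
  | 0 => alpha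
  | k'.+1 => let y := (cf_rem alpha k')^-1 in y - (Num.floor y)%:~R
  end.

(* partial quotients a_n = floor(1 / x_{n-1}), n >= 1 *)
Definition cf_a (alpha : R) (n : nat) : nat := Num.truncn ((cf_rem alpha n.-1)^-1).

(* cf_pq alpha n = ((p_{n-1}, q_{n-1}), (p_n, q_n)) *)
Fixpoint cf_pq (alpha : R) (n : nat) : (nat * nat) * (nat * nat) :=
  match n with
  | 0 => ((1%N, 0%N), (0%N, 1%N))
  | n'.+1 =>
      let: ((pm, qm), (p, q)) := cf_pq alpha n' in
      let a := cf_a alpha n in
      ((p, q), (a * p + pm, a * q + qm)%N)
  end.

Definition cf_p (alpha : R) (n : nat) : nat := (cf_pq alpha n).2.1.
Definition cf_q (alpha : R) (n : nat) : nat := (cf_pq alpha n).2.2.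

End Defs.

From HB Require Import structures.
From mathcomp Require Import all_boot all_order all_algebra.
From mathcomp Require Import all_classical all_reals all_analysis.
From mathcomp Require Import zify ring lra.
Import Order.TTheory GRing.Theory Num.Theory.
Local Open Scope ring_scope.
Local Open Scope classical_set_scope.

Set Implicit Arguments.
Unset Strict Implicit.
Unset Printing Implicit Defensive.

(* For even [n] write [q = q_n], [Q = q_(n+2)], [a = a_(n+2)]. Since
   [p_(n+2) q_n - p_n q_(n+2) = a], the two inequalities can disagree only if
   [gamma] lies in an interval of length at most [4 Q^(1-tau) q^(tau+1)], and for
   [gamma < 1/2] only when [a < 2 Q / q^tau], which in turn forces
   [Q > q^tau / 2]. Summing over [a] and then over [Q], the union [E_q] of these
   intervals has measure [O(q^(-(tau^2 - 3 tau - 1)))], which is summable exactly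
   when [tau > (3 + sqrt 17)/2]. By Borel-Cantelli almost every [gamma] lies in
   finitely many [E_q], and as [q_n >= n] this gives the equivalence for all large
   even [n]. *)

Section ContinuedFractions.
Variable R : realType.
Implicit Types alpha : R.

Lemma cf_remS alpha k :
  cf_rem alpha k.+1 = (cf_rem alpha k)^-1 - (Num.floor (cf_rem alpha k)^-1)%:~R.
Proof. by []. Qed.

Lemma cf_rem_itv alpha k : 0 < alpha < 1 -> 0 <= cf_rem alpha k < 1.
Proof.
move=> /andP[a0 a1]; case: k => [|k]; first by rewrite /= ltW.
rewrite cf_remS; have := floor_itv (cf_rem alpha k)^-1.
rewrite intrD /= => /andP[h1 h2]; apply/andP; split; lra.
Qed.

Lemma cf_rem_eq0_le alpha k j :
  (k <= j)%N -> cf_rem alpha k = 0 -> cf_rem alpha j = 0.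
Proof.
move=> /subnK <-; elim: (j - k)%N => [//|i IH] /IH r0.
by rewrite addSn cf_remS r0 invr0 floor0 subr0.
Qed.

Lemma cf_a_gt0 alpha k :
  0 < alpha < 1 -> cf_rem alpha k != 0 -> (0 < cf_a alpha k.+1)%N.
Proof.
move=> ha rk; rewrite /cf_a truncn_gt0.
have /andP[r0 r1] := cf_rem_itv k ha.
by rewrite ltW // invf_gt1 // lt_def rk r0.
Qed.

Lemma cf_a_eq0 alpha k : cf_rem alpha k = 0 -> cf_a alpha k.+1 = 0%N.
Proof. by rewrite /cf_a /= => ->; rewrite invr0 truncn0. Qed.

(* Positive partial quotients form an initial segment, as a vanishing remainder stays zero. *)
Lemma cf_a_gt0_le alpha k j : 0 < alpha < 1 ->
  (0 < cf_a alpha k)%N -> (0 < j <= k)%N -> (0 < cf_a alpha j)%N.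
Proof.
case: k j => [|k] [|j] ha ak //=; rewrite ltnS => jk.
by apply: cf_a_gt0 => //; apply: contraTneq ak => /(cf_rem_eq0_le jk) /cf_a_eq0 ->.
Qed.

Lemma cf_pSS alpha k :
  cf_p alpha k.+2 = (cf_a alpha k.+2 * cf_p alpha k.+1 + cf_p alpha k)%N.
Proof. by rewrite /cf_p /=; case: (cf_pq alpha k) => [[? ?] [? ?]]. Qed.

Lemma cf_qSS alpha k :
  cf_q alpha k.+2 = (cf_a alpha k.+2 * cf_q alpha k.+1 + cf_q alpha k)%N.
Proof. by rewrite /cf_q /=; case: (cf_pq alpha k) => [[? ?] [? ?]]. Qed.

Lemma cf_det alpha k :
  (cf_p alpha k.+1)%:R * (cf_q alpha k)%:R - (cf_p alpha k)%:R * (cf_q alpha k.+1)%:R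
    = (-1) ^+ k :> R.
Proof.
elim: k => [|k IH]; first by rewrite /cf_p /cf_q /= muln0 mul0r subr0 mulr1.
by rewrite cf_pSS cf_qSS !natrD !natrM exprS -IH; ring.
Qed.

Lemma cf_det2 alpha n :
  (cf_p alpha n.+2)%:R * (cf_q alpha n)%:R - (cf_p alpha n)%:R * (cf_q alpha n.+2)%:R
    = (cf_a alpha n.+2)%:R * (-1) ^+ n :> R.
Proof. by rewrite cf_pSS cf_qSS !natrD !natrM -(cf_det alpha); ring. Qed.

Lemma cf_q_ge alpha k :
  (forall j, (0 < j <= k)%N -> (0 < cf_a alpha j)%N) -> (k <= cf_q alpha k)%N.
Proof.
suff grow m : (forall j, (0 < j <= m.+1)%N -> (0 < cf_a alpha j)%N) ->
    (0 < cf_q alpha m)%N /\ (m.+1 <= cf_q alpha m.+1)%N.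
  by case: k => // k /grow [].
elim: m => [|m IH] a_gt0.
  by rewrite /cf_q /=; have := a_gt0 1%N isT; lia.
have [q_gt0 qS_ge] : (0 < cf_q alpha m)%N /\ (m.+1 <= cf_q alpha m.+1)%N.
  by apply: IH => j /andP[j0 jk]; apply: a_gt0; rewrite j0 ltnW.
have := a_gt0 m.+2; rewrite cf_qSS /=; nia.
Qed.

End ContinuedFractions.

Section RealSums.
Variable R : realType.

Lemma le0_ger_powR (r x y : R) : r <= 0 -> 0 < x -> x <= y -> y `^ r <= x `^ r.
Proof.
move=> r0 x0 xy; have y0 := lt_le_trans x0 xy.
have : x `^ (- r) <= y `^ (- r).
  by apply: ge0_ler_powR => //; rewrite ?oppr_ge0 // nnegrE ltW.
by rewrite !powRN lef_pV2 ?posrE ?powR_gt0.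
Qed.

Lemma mulr_powR (x e : R) : 0 < x -> x * x `^ e = x `^ (1 + e).
Proof.
move=> x0; rewrite powRD ?powRr1 ?(ltW x0) //.
by apply/implyP => _; rewrite gt_eqF.
Qed.

Lemma powR_bernoulli (c t : R) : 0 <= c -> t < 1 -> 1 + c * t <= (1 - t) `^ (- c).
Proof.
move=> c0 t1; rewrite /powR gt_eqF ?subr_gt0 //.
apply: le_trans (expR_ge1Dx _); rewrite lerD2l.
have : ln (1 - t) <= - t by apply: le_ln1Dx; lra.
nra.
Qed.

(* One step of the comparison of [\sum_n n^-b] with [\int t^-b dt]. *)
Lemma powRN_le_diff (b y : R) : 1 < b -> 1 < y ->
  (b - 1) * y `^ (- b) <= (y - 1) `^ (1 - b) - y `^ (1 - b).
Proof.
move=> b1 y1; have y0 : 0 < y by lra.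
have yV1 : y^-1 < 1 by rewrite invf_lt1.
have -> : y - 1 = y * (1 - y^-1) by rewrite mulrBr mulr1 divff ?gt_eqF.
have -> : 1 - b = - (b - 1) by ring.
rewrite powRM; [|exact: ltW|by rewrite subr_ge0 ltW].
have bern : 1 + (b - 1) * y^-1 <= (1 - y^-1) `^ (- (b - 1)).
  by apply: powR_bernoulli => //; lra.
have yZ : y `^ (1 - b) = y * y `^ (- b).
  by rewrite powRD ?powRr1 ?(ltW y0) //; apply/implyP => _; rewrite gt_eqF.
rewrite opprB yZ.
set Z := y `^ (- b); have Z0 : 0 < Z by apply: powR_gt0.
have : y * Z * ((b - 1) * y^-1) <= y * Z * ((1 - y^-1) `^ (1 - b) - 1).
  by rewrite ler_pM2l ?mulr_gt0 //; rewrite opprB in bern; lra.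
have -> : y * Z * ((b - 1) * y^-1) = (b - 1) * Z by field; rewrite gt_eqF.
lra.
Qed.

Lemma sum_powRN_tail (b x : R) K : 1 < b -> 1 < x ->
  \sum_(0 <= n < K | x < n%:R) n%:R `^ (- b) <= (x - 1) `^ (1 - b) / (b - 1).
Proof.
move=> b1 x1; have b0 : 0 < b - 1 by lra.
pose g t := t `^ (1 - b) / (b - 1).
have g_anti s t : 0 < s -> s <= t -> g t <= g s.
  by move=> s0 st; rewrite ler_pM2r ?invr_gt0 //; apply: le0_ger_powR => //; lra.
have g_ge0 t : 0 <= g t by rewrite divr_ge0 ?powR_ge0 // ltW.
suff tail : \sum_(0 <= n < K | x < n%:R) n%:R `^ (- b) <=
    (if x < K%:R then g (x - 1) - g (K%:R - 1) else 0).
  apply: le_trans tail _; case: ifP => _; last exact: g_ge0.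
  by rewrite lerBlDr lerDl.
elim: K => [|K IH]; first by rewrite big_geq // ifF //; apply/negbTE; rewrite -leNgt; lra.
rewrite big_mkcond big_nat_recr //= -big_mkcond /=.
have KS : K.+1%:R - 1 = K%:R :> R by rewrite -natr1 addrK.
case: (ltrP x K%:R) => xK.
- have step : K%:R `^ (- b) <= g (K%:R - 1) - g K%:R.
    rewrite /g -mulrBl ler_pdivlMr // mulrC; apply: powRN_le_diff => //; lra.
  rewrite xK in IH; rewrite ifT ?KS; last by rewrite (lt_le_trans xK) // ler_nat.
  lra.
- rewrite ltNge xK /= in IH; rewrite addr0; case: ifP => // xKS.
  have : g K%:R <= g (x - 1) by apply: g_anti; lra.
  rewrite KS; lra.
Qed.

Lemma sum_count_le (X C : R) K : 0 <= C ->
  \sum_(0 <= a < K | (0 < a)%N && (a%:R < X)) C <= (if 1 < X then X * C else 0).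
Proof.
move=> C0; case: ifPn => [X1|]; last first.
  rewrite -leNgt => X1; rewrite big_pred0 // => a.
  apply/negP => /andP[a0 aX]; have : 1 <= a%:R :> R by rewrite ler1n.
  lra.
suff [] : \sum_(0 <= a < K | (0 < a)%N && (a%:R < X)) C <= C * K.-1%:R /\
          \sum_(0 <= a < K | (0 < a)%N && (a%:R < X)) C <= X * C by [].
elim: K => [|K [IHK IHX]]; first by rewrite big_geq // mulr0 mulr_ge0 //; lra.
rewrite big_mkcond big_nat_recr //= -big_mkcond /=.
case: ifP => [/andP[K0 KX]|_]; last first.
  by rewrite addr0; split=> //; apply: le_trans IHK _; rewrite ler_wpM2l // ler_nat leq_pred.
have eK : C * K.-1%:R + C = C * K%:R by rewrite -[in RHS](prednK K0) -natr1 mulrDr mulr1.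
have : C * K%:R <= X * C by rewrite mulrC ler_wpM2r // ltW.
lra.
Qed.

End RealSums.

Section Measures.
Variable R : realType.

Lemma nneseries_le_partial (f : nat -> R) M : (forall n, 0 <= f n) ->
  (forall K, \sum_(0 <= n < K) f n <= M) -> (\sum_(n <oo) (f n)%:E <= M%:E)%E.
Proof.
move=> f0 sumf; apply: lime_le; first by apply: is_cvg_nneseries => n _ _; rewrite lee_fin.
by apply: nearW => K; rewrite sumEFin lee_fin.
Qed.

Lemma measure_bigcup_le d (T : measurableType d) (mu : {measure set T -> \bar R})
    (F : (set T)^nat) (f : nat -> R) M :
  (forall n, measurable (F n)) -> (forall n, 0 <= f n) ->
  (forall n, (mu (F n) <= (f n)%:E)%E) -> (forall K, \sum_(0 <= n < K) f n <= M) ->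
  (mu (\bigcup_n F n) <= M%:E)%E.
Proof.
move=> mF f0 muF sumf.
apply: le_trans (measure_sigma_subadditive mu mF (bigcupT_measurable _ mF) (@subset_refl _ _)) _.
apply: le_trans (lee_nneseries _ (fun n _ => muF n)) (nneseries_le_partial f0 sumf).
by move=> n _ _; exact: measure_ge0.
Qed.

End Measures.

Lemma lim_sup_set_measurable d (T : measurableType d) (F : (set T)^nat) :
  (forall n, measurable (F n)) -> measurable (lim_sup_set F).
Proof.
move=> mF; apply: bigcapT_measurable => n.
by apply: bigcup_measurable => j _; exact: mF.
Qed.

Lemma not_lim_sup_set T (F : (set T)^nat) x :
  ~ lim_sup_set F x -> exists N, forall j, (N <= j)%N -> ~ F j x.
Proof.
move=> Fx; apply: contrapT => noN; apply: Fx => n _; apply: contrapT => Fn; apply: noN.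
by exists n => j nj Fjx; apply: Fn; exists j.
Qed.

(* For [q = q_n], [Q = q_(n+2)] and [a = a_(n+2)], [gap q Q a] is
   [p_(n+2)/q_(n+2) - p_n/q_n], and the two inequalities of the theorem read
   [gamma * sep q Q < gap q Q a] and [gamma * sep_margin q Q < gap q Q a].
   [exc_itv q Q a] is the set of [gamma] for which the first holds and the second
   fails; it is taken empty unless [4 <= q <= Q], [0 < a] and it contains some
   [gamma < 1/2]. *)
Definition gap {R : realType} (q Q a : nat) : R := a%:R / (q%:R * Q%:R).

Section ExceptionalSets.
Variable R : realType.
Variable tau : R.
Hypothesis tau_ge : 7 / 2 <= tau.
Implicit Types (q Q a : nat) (x : R).

Definition sep q Q : R := q%:R `^ (- (tau + 1)) + Q%:R `^ (- (tau + 1)).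
Definition sep_margin q Q : R := sep q Q + 2 * Q%:R `^ (1 - tau).

Definition admissible q Q a : bool :=
  [&& (4 <= q)%N, (q <= Q)%N, (0 < a)%N & gap q Q a < sep_margin q Q / 2].

Definition exc_itv q Q a : set R :=
  if admissible q Q a then `[gap q Q a / sep_margin q Q, gap q Q a / sep q Q[
  else set0.

Definition exc_width q Q a : R :=
  if admissible q Q a then gap q Q a / sep q Q - gap q Q a / sep_margin q Q else 0.

Definition exc_set q : set R := \bigcup_Q \bigcup_a exc_itv q Q a.

Definition width_bound q Q : R :=
  if [&& (4 <= q)%N, (q <= Q)%N & q%:R `^ tau / 2 < Q%:R]
  then 8 * q%:R * Q%:R `^ (2 - tau) else 0.

Definition decay : R := tau ^+ 2 - 3 * tau - 1.
Definition exc_const : R := 8 * (4^-1) `^ (3 - tau) / (tau - 3).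
Definition mass_bound q : R := if (4 <= q)%N then exc_const * q%:R `^ (- decay) else 0.

Lemma sep_gt0 q Q : (0 < q)%N -> 0 < sep q Q.
Proof.
move=> q0; rewrite /sep; have := powR_ge0 (Q%:R : R) (- (tau + 1)).
suff : 0 < q%:R `^ (- (tau + 1)) :> R by lra.
by apply: powR_gt0; rewrite ltr0n.
Qed.

Lemma sep_le_margin q Q : sep q Q <= sep_margin q Q.
Proof. by rewrite /sep_margin lerDl mulr_ge0 ?powR_ge0. Qed.

Lemma exc_itv_margin_fail q Q a (p P : nat) gamma :
  (4 <= q)%N -> (q <= Q)%N -> (0 < a)%N -> 0 < gamma < 2^-1 ->
  P%:R * q%:R - p%:R * Q%:R = a%:R :> R ->
  p%:R / q%:R + gamma / q%:R `^ (tau + 1) < P%:R / Q%:R - gamma / Q%:R `^ (tau + 1) ->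
  P%:R / Q%:R - gamma / Q%:R `^ (tau + 1) - 2 * gamma / Q%:R `^ (tau - 1)
    <= p%:R / q%:R + gamma / q%:R `^ (tau + 1) ->
  exc_itv q Q a gamma.
Proof.
move=> q4 qQ a0 /andP[g0 g1] det lt_sep le_margin.
have q0 : 0 < q%:R :> R by rewrite ltr0n; lia.
have Q0 : 0 < Q%:R :> R by rewrite ltr0n; lia.
have s0 : 0 < sep q Q by apply: sep_gt0; lia.
have sm0 := lt_le_trans s0 (sep_le_margin q Q).
have diff : P%:R / Q%:R - p%:R / q%:R = gap q Q a :> R.
  by rewrite /gap -det; field; rewrite !gt_eqF.
have lo : gamma * sep q Q < gap q Q a.
  by move: lt_sep; rewrite /sep -diff !powRN; lra.
have hi : gap q Q a <= gamma * sep_margin q Q.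
  move: le_margin; rewrite /sep_margin /sep -diff !powRN.
  by rewrite (_ : 1 - tau = - (tau - 1)) ?powRN; [lra | ring].
have adm : admissible q Q a.
  rewrite /admissible q4 qQ a0 /=; apply: le_lt_trans hi _.
  by rewrite mulrC ltr_pM2l.
rewrite /exc_itv adm /= in_itv /= ler_pdivrMr // ltr_pdivlMr //.
by rewrite hi lo.
Qed.

Lemma powR_3B_le_half x : 4 <= x -> x `^ (3 - tau) <= 2^-1.
Proof.
move=> x4; have t72 := tau_ge.
have h1 : x `^ (3 - tau) <= 4 `^ (3 - tau) by apply: le0_ger_powR => //; lra.
have h2 : 4 `^ (3 - tau) <= 4 `^ (- 2^-1) :> R by apply: ler_powR; lra.
have h3 : 4 `^ (- 2^-1) = 2^-1 :> R.
  rewrite powRN powR12_sqrt; last lra.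
  have -> : 4 = 2 ^+ 2 :> R by rewrite expr2; lra.
  by rewrite sqrtr_sqr ger0_norm.
lra.
Qed.

Lemma gap_admissible q Q a : admissible q Q a -> gap q Q a < 2 * q%:R `^ (- (tau + 1)).
Proof.
case/and4P=> q4 qQ a0; have t72 := tau_ge; rewrite /sep_margin /sep /gap.
set u := q%:R `^ _; set v := Q%:R `^ _; set z := Q%:R `^ _ => ra.
have q4r : 4 <= q%:R :> R by rewrite (ler_nat R 4).
have qQr : q%:R <= Q%:R :> R by rewrite ler_nat.
have vu : v <= u by apply: le0_ger_powR => //; lra.
have qQ0 : 0 < q%:R * Q%:R :> R by apply: mulr_gt0; lra.
have Q0 : 0 < Q%:R :> R by lra.
have QQz : Q%:R * Q%:R * z = Q%:R `^ (3 - tau).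
  by rewrite /z -mulrA !mulr_powR //; congr powR; ring.
have qQz : q%:R * Q%:R * z <= 2^-1.
  apply: le_trans (powR_3B_le_half (le_trans q4r qQr)).
  by rewrite -QQz ler_pM2r ?powR_gt0 // ler_pM2r.
have a1 : 1 <= a%:R :> R by rewrite ler1n.
set m := q%:R * Q%:R in qQ0 qQz ra *.
rewrite ltr_pdivrMr // in ra; rewrite ltr_pdivrMr //.
have : (u + v + 2 * z) / 2 * m <= u * m + z * m by rewrite -mulrDl ler_pM2r //; lra.
rewrite [m * z]mulrC in qQz; lra.
Qed.

Lemma exc_width_le q Q a : admissible q Q a ->
  exc_width q Q a <= 4 * Q%:R `^ (1 - tau) / q%:R `^ (- (tau + 1)).
Proof.
move=> adm; have := gap_admissible adm; rewrite /exc_width adm /sep_margin /sep.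
set r := gap q Q a; set u := q%:R `^ _; set v := Q%:R `^ _; set z := Q%:R `^ _ => r2u.
have q0 : 0 < q%:R :> R by rewrite ltr0n; case/and4P: adm => q4 _ _ _; lia.
have Q0 : 0 < Q%:R :> R by rewrite ltr0n; case/and4P: adm => q4 qQ _ _; lia.
have u0 : 0 < u by apply: powR_gt0.
have v0 : 0 < v by apply: powR_gt0.
have z0 : 0 < z by apply: powR_gt0.
have r0 : 0 < r by rewrite /r /gap divr_gt0 ?mulr_gt0 // ltr0n; case/and4P: adm.
have -> : r / (u + v) - r / (u + v + 2 * z) = 2 * r * z / ((u + v) * (u + v + 2 * z)).
  by field; rewrite !gt_eqF //; lra.
have uu : u * u <= (u + v) * (u + v + 2 * z) by nra.
have -> : 4 * z / u = 4 * z * u / (u * u) by field; rewrite gt_eqF.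
have s0 : 0 < u + v by lra.
have c0 : 0 < u + v + 2 * z by lra.
apply: le_trans (_ : 2 * r * z / (u * u) <= _).
  apply: ler_wpM2l; first by rewrite !mulr_ge0 //; lra.
  by rewrite lef_pV2 ?posrE ?mulr_gt0.
by rewrite ler_pM2r ?invr_gt0 ?mulr_gt0 //; nra.
Qed.

Lemma sum_exc_width_le q Q K : \sum_(0 <= a < K) exc_width q Q a <= width_bound q Q.
Proof.
have t72 := tau_ge; rewrite /width_bound.
have [/andP[q4 qQ]|not_qQ] := boolP ((4 <= q)%N && (q <= Q)%N); last first.
  rewrite ifF; last by apply/negbTE; apply: contra not_qQ => /and3P[-> ->].
  rewrite big1 // => a _; rewrite /exc_width ifF //.
  by apply/negbTE; apply: contra not_qQ => /and4P[-> ->].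
rewrite q4 qQ /=.
have q4r : 4 <= q%:R :> R by rewrite (ler_nat R 4).
have qQr : q%:R <= Q%:R :> R by rewrite ler_nat.
have q0 : 0 < q%:R :> R by lra.
have Q0 : 0 < Q%:R :> R by lra.
set u := q%:R `^ (- (tau + 1)); set z := Q%:R `^ (1 - tau); set t := q%:R `^ (- tau).
have u0 : 0 < u by apply: powR_gt0.
have z0 : 0 < z by apply: powR_gt0.
have qu : q%:R * u = t by rewrite mulr_powR //; congr powR; ring.
pose C := 4 * z / u.
apply: le_trans (_ : \sum_(0 <= a < K | (0 < a)%N && (a%:R < 2 * Q%:R * t)) C <= _).
  rewrite [leRHS]big_mkcond; apply: ler_sum => a _.
  have [adm|not_adm] := boolP (admissible q Q a); last first.
    rewrite /exc_width (negbTE not_adm); case: ifP => // _.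
    by rewrite /C divr_ge0 ?mulr_ge0 //; lra.
  rewrite ifT; first exact: exc_width_le.
  case/and4P: (adm) => _ _ -> _ /=; have := gap_admissible adm.
  rewrite /gap ltr_pdivrMr ?mulr_gt0 // -/u -qu; lra.
apply: le_trans (sum_count_le _ _ _) _; first by rewrite /C divr_ge0 ?mulr_ge0 //; lra.
have qt0 : 0 < q%:R `^ tau :> R by apply: powR_gt0.
have -> : (1 < 2 * Q%:R * t) = (q%:R `^ tau / 2 < Q%:R).
  by rewrite /t powRN ltr_pdivlMr // mul1r [RHS]ltr_pdivrMr // mulrC.
case: ifP => // _; rewrite /C -qu.
have -> : Q%:R `^ (2 - tau) = Q%:R * z by rewrite mulr_powR //; congr powR; ring.
by rewrite le_eqVlt; apply/orP; left; apply/eqP; field; rewrite gt_eqF.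
Qed.

Lemma sum_width_bound_le q K : \sum_(0 <= Q < K) width_bound q Q <= mass_bound q.
Proof.
have t72 := tau_ge; rewrite /mass_bound; case: ifP => q4; last first.
  by rewrite big1 // => Q _; rewrite /width_bound q4.
have q4r : 4 <= q%:R :> R by rewrite (ler_nat R 4).
have qt : q%:R <= q%:R `^ tau by apply: le1r_powR; lra.
set x := q%:R `^ tau / 2.
have x1 : 1 < x by rewrite /x; lra.
apply: le_trans (_ : 8 * q%:R * \sum_(0 <= Q < K | x < Q%:R) Q%:R `^ (- (tau - 2)) <= _).
  rewrite [in leRHS]big_mkcond mulr_sumr; apply: ler_sum => Q _.
  rewrite /width_bound q4 /= -/x.
  case: (ltrP x Q%:R) => _; last by rewrite andbF mulr0.
  by rewrite andbT opprB; case: ifP => // _; rewrite !mulr_ge0 ?powR_ge0 //; lra.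
have b1 : 1 < tau - 2 by lra.
have := sum_powRN_tail K b1 x1.
rewrite (_ : 1 - (tau - 2) = 3 - tau); last by ring.
rewrite (_ : tau - 2 - 1 = tau - 3) => [tail|]; last by ring.
apply: le_trans (_ : 8 * q%:R * ((x - 1) `^ (3 - tau) / (tau - 3)) <= _).
  by rewrite ler_pM2l ?tail //; lra.
have x4 : (x - 1) `^ (3 - tau) <= (q%:R `^ tau / 4) `^ (3 - tau).
  by apply: le0_ger_powR; rewrite /x; lra.
apply: le_trans (_ : 8 * q%:R * ((q%:R `^ tau / 4) `^ (3 - tau) / (tau - 3)) <= _).
  by rewrite ler_pM2l ?ler_pM2r ?invr_gt0 //; lra.
have -> : (q%:R `^ tau / 4) `^ (3 - tau) = q%:R `^ (tau * (3 - tau)) * (4^-1) `^ (3 - tau).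
  by rewrite powRM ?powRrM // ?powR_ge0 ?invr_ge0.
have <- : q%:R * q%:R `^ (tau * (3 - tau)) = q%:R `^ (- decay).
  by rewrite mulr_powR; [congr powR; rewrite /decay; ring | lra].
rewrite /exc_const le_eqVlt; apply/orP; left; apply/eqP; field; rewrite gt_eqF //; lra.
Qed.

Lemma decay_gt1 : (3 + Num.sqrt 17) / 2 < tau -> 1 < decay.
Proof.
move=> tau_gt; rewrite /decay.
have s0 := sqrtr_ge0 (17 : R).
have s2 : Num.sqrt (17 : R) ^+ 2 = 17 by rewrite sqr_sqrtr.
rewrite expr2 in s2 *; nra.
Qed.

Lemma sum_mass_bound_le K : (3 + Num.sqrt 17) / 2 < tau ->
  \sum_(0 <= q < K) mass_bound q <= exc_const * (2 `^ (1 - decay) / (decay - 1)).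
Proof.
move=> /decay_gt1 decay1; have t72 := tau_ge.
have C0 : 0 <= exc_const by rewrite /exc_const !divr_ge0 ?mulr_ge0 ?powR_ge0 //; lra.
have x1 : 1 < 3 :> R by lra.
have tail := sum_powRN_tail K decay1 x1; rewrite (_ : 3 - 1 = 2 :> R) in tail; last lra.
apply: le_trans _ (ler_wpM2l C0 tail); rewrite [in leRHS]big_mkcond mulr_sumr.
by apply: ler_sum => q _; rewrite /mass_bound ltr_nat; case: ifP; rewrite ?mulr0.
Qed.

Local Notation mu := (@lebesgue_measure R).

Lemma exc_itv_measurable q Q a : measurable (exc_itv q Q a).
Proof. by rewrite /exc_itv; case: ifP => _; [exact: measurable_itv | exact: measurable0]. Qed.

Lemma exc_set_measurable q : measurable (exc_set q).
Proof.
by apply: bigcupT_measurable => Q; apply: bigcupT_measurable; exact: exc_itv_measurable.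
Qed.

Lemma exc_width_ge0 q Q a : 0 <= exc_width q Q a.
Proof.
rewrite /exc_width; case: ifP => // /and4P[q4 _ _ _].
have s0 : 0 < sep q Q by apply: sep_gt0; lia.
have sm0 := lt_le_trans s0 (sep_le_margin q Q).
rewrite subr_ge0 ler_wpM2l ?divr_ge0 ?mulr_ge0 // lef_pV2 ?posrE //.
exact: sep_le_margin.
Qed.

Lemma lebesgue_exc_itv q Q a : (mu (exc_itv q Q a) <= (exc_width q Q a)%:E)%E.
Proof.
have := exc_width_ge0 q Q a; rewrite /exc_itv /exc_width.
case: ifP => _ w0; last by rewrite measure0.
by rewrite lebesgue_measure_itv /=; case: ifP => _; rewrite -?EFinB lee_fin.
Qed.

Lemma width_bound_ge0 q Q : 0 <= width_bound q Q.
Proof. by rewrite /width_bound; case: ifP => _; rewrite ?mulr_ge0 ?powR_ge0. Qed.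

Lemma mass_bound_ge0 q : 0 <= mass_bound q.
Proof.
have t72 := tau_ge; rewrite /mass_bound /exc_const; case: ifP => // _.
by rewrite mulr_ge0 ?powR_ge0 // divr_ge0 ?mulr_ge0 ?powR_ge0 //; lra.
Qed.

Lemma lebesgue_exc_set q : (mu (exc_set q) <= (mass_bound q)%:E)%E.
Proof.
apply: (measure_bigcup_le (mu := mu) _ (width_bound_ge0 q) _ (sum_width_bound_le q)).
  by move=> Q; apply: bigcupT_measurable; exact: exc_itv_measurable.
move=> Q; exact: (measure_bigcup_le (mu := mu) (exc_itv_measurable q Q)) (exc_width_ge0 q Q)
  (lebesgue_exc_itv q Q) (sum_exc_width_le q Q).
Qed.

Lemma lebesgue_lim_sup_exc_set :
  (3 + Num.sqrt 17) / 2 < tau -> mu (lim_sup_set (exc_set)) = 0%E.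
Proof.
move=> tau_gt; apply: lim_sup_set_cvg0; first exact: exc_set_measurable.
apply: le_lt_trans (ltry (exc_const * (2 `^ (1 - decay) / (decay - 1)))).
apply: le_trans (lee_nneseries _ (fun q _ => lebesgue_exc_set q)) _.
  by move=> q _ _; exact: measure_ge0.
exact: nneseries_le_partial mass_bound_ge0 (fun K => sum_mass_bound_le K tau_gt).
Qed.

End ExceptionalSets.

Lemma tau_ge_7half (R : realType) (tau : R) : (3 + Num.sqrt 17) / 2 < tau -> 7 / 2 <= tau.
Proof.
move=> tau_gt; have s0 := sqrtr_ge0 (17 : R).
have s2 : Num.sqrt (17 : R) ^+ 2 = 17 by rewrite sqr_sqrtr.
rewrite expr2 in s2; nra.
Qed.

Lemma cf_margin_iff (R : realType) (tau gamma alpha : R) N n :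
  7 / 2 <= tau -> 0 < gamma < 2^-1 -> 0 < alpha < 1 ->
  (forall j, (N <= j)%N -> ~ exc_set tau j gamma) -> (maxn N 4 <= n)%N -> ~~ odd n ->
  let pn := (cf_p alpha n)%:R in
  let qn := (cf_q alpha n)%:R in
  let pn2 := (cf_p alpha n.+2)%:R in
  let qn2 := (cf_q alpha n.+2)%:R in
  (pn / qn + gamma / qn `^ (tau + 1) < pn2 / qn2 - gamma / qn2 `^ (tau + 1)
   <->
   pn / qn + gamma / qn `^ (tau + 1)
     < pn2 / qn2 - gamma / qn2 `^ (tau + 1) - 2 * gamma / qn2 `^ (tau - 1)).
Proof.
move=> tau_ge g01 alpha01 not_exc nN ev pn qn pn2 qn2.
have margin0 : 0 <= 2 * gamma / qn2 `^ (tau - 1).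
  by case/andP: g01 => g0 _; rewrite divr_ge0 ?powR_ge0 // mulr_ge0 // ltW.
split=> [lt_sep|]; last lra.
rewrite ltNge; apply/negP => le_margin.
have [a0|a_gt0] := posnP (cf_a alpha n.+2).
  have gq0 : 0 <= gamma / qn `^ (tau + 1).
    by case/andP: g01 => g0 _; rewrite divr_ge0 ?powR_ge0 // ltW.
  move: lt_sep; rewrite /pn2 /qn2 cf_pSS cf_qSS a0 !mul0n !add0n -/pn -/qn; lra.
have q_ge : (n <= cf_q alpha n)%N.
  by apply: cf_q_ge => j jn; apply: cf_a_gt0_le alpha01 a_gt0 _; lia.
have qQ : (cf_q alpha n <= cf_q alpha n.+2)%N by rewrite cf_qSS leq_addl.
have [Nn n4] : (N <= n)%N /\ (4 <= n)%N by apply/andP; rewrite -geq_max.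
apply: (not_exc (cf_q alpha n)); first lia.
exists (cf_q alpha n.+2) => //; exists (cf_a alpha n.+2) => //.
apply: exc_itv_margin_fail lt_sep le_margin => //; first lia.
by rewrite cf_det2 -signr_odd (negbTE ev) mulr1.
Qed.

Unset Implicit Arguments.

Theorem lemma7 (R : realType) (tau : R) :
  (3 + Num.sqrt 17) / 2 < tau ->
  {ae (@lebesgue_measure R), forall gamma : R,
     gamma \in `]0, 2^-1[ ->
     forall alpha : R, Dgt gamma tau alpha ->
       exists N : nat, forall n : nat, (N <= n)%N -> ~~ odd n ->
         let pn := (cf_p alpha n)%:R in
         let qn := (cf_q alpha n)%:R in
         let pn2 := (cf_p alpha n.+2)%:R in
         let qn2 := (cf_q alpha n.+2)%:R in
         (pn / qn + gamma / qn `^ (tau + 1) < pn2 / qn2 - gamma / qn2 `^ (tau + 1)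
          <->
          pn / qn + gamma / qn `^ (tau + 1)
            < pn2 / qn2 - gamma / qn2 `^ (tau + 1) - 2 * gamma / qn2 `^ (tau - 1))}.
Proof.
move=> tau_gt; have tau_ge := tau_ge_7half tau_gt.
exists (lim_sup_set (exc_set tau)); split.
- by apply: lim_sup_set_measurable => q; exact: exc_set_measurable.
- exact: lebesgue_lim_sup_exc_set.
move=> gamma /= not_ae; apply: contrapT => not_lim.
have [N not_exc] := not_lim_sup_set not_lim; apply: not_ae.
rewrite /= inE /= in_itv /= => g01 alpha [alpha01 _].
exists (maxn N 4) => n nN ev.
exact: (cf_margin_iff tau_ge g01 alpha01 not_exc nN ev).
Qed.
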